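(* For every $n\ge3$ and every integer $k$ with $1<k<n$ there exists a positive semidefinite $n\times n$ matrix of rank $k$ which is perfect copositive.
   Context: $\mathcal{S}^n$: real symmetric $n\times n$ matrices; $B[v]=v^\top Bv$; $\mathcal{COP}^n=\{B\in\mathcal{S}^n: B[x]\ge0\ \forall x\in\mathbb{R}^n_{\ge0}\}$; strictly copositive means lying in the interior of $\mathcal{COP}^n$. $\min_{\mathcal{COP}}B=\inf\{B[v]: v\in\mathbb{Z}^n_{\ge0}\setminus\{0\}\}$, $\operatorname{Min}_{\mathcal{COP}}B=\{v\in\mathbb{Z}^n_{\ge0}: B[v]=\min_{\mathcal{COP}}B\}$. A strictly copositive $P$ is perfect copositive if it is the unique $Q\in\mathcal{S}^n$ with $Q[v]=\min_{\mathcal{COP}}P$ for all $v\in\operatorname{Min}_{\mathcal{COP}}P$. *)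

From HB Require Import structures.
From mathcomp Require Import all_boot all_order all_algebra.
From mathcomp Require Import classical_sets reals.
Set Implicit Arguments. Unset Strict Implicit. Unset Printing Implicit Defensive.
Import Order.TTheory GRing.Theory Num.Theory.
Local Open Scope ring_scope.
Local Open Scope classical_set_scope.

Section CopositiveDefs.
Variables (R : realType) (n : nat).

Definition symmetric_mx (B : 'M[R]_n) : Prop := B^T = B.

Definition qform (B : 'M[R]_n) (v : 'cV[R]_n) : R := (v^T *m B *m v) 0 0.

Definition natvec (v : 'I_n -> nat) : 'cV[R]_n := \col_i (v i)%:R.

Definition copositive (B : 'M[R]_n) : Prop :=
  symmetric_mx B /\
  forall x : 'cV[R]_n, (forall i, 0 <= x i 0) -> 0 <= qform B x.

(* strictly copositive: B lies in the interior of COP^n inside S^n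
   (topology of S^n given by the entrywise max-norm; all norms are equivalent) *)
Definition strictly_copositive (B : 'M[R]_n) : Prop :=
  symmetric_mx B /\
  exists eps : R, 0 < eps /\
    forall C : 'M[R]_n, symmetric_mx C ->
      (forall i j, `|C i j - B i j| < eps) -> copositive C.

Definition minCOP (B : 'M[R]_n) : R :=
  inf [set qform B (natvec v) | v in [set v : 'I_n -> nat | exists i, v i <> 0%N]].

Definition MinCOP (B : 'M[R]_n) : set ('I_n -> nat) :=
  [set v | qform B (natvec v) = minCOP B].

Definition perfect_copositive (P : 'M[R]_n) : Prop :=
  strictly_copositive P /\
  forall Q : 'M[R]_n, symmetric_mx Q ->
    (forall v, MinCOP P v -> qform Q (natvec v) = minCOP P) -> Q = P.

Definition psd (A : 'M[R]_n) : Prop :=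
  symmetric_mx A /\ forall x : 'cV[R]_n, 0 <= qform A x.

End CopositiveDefs.

From mathcomp Require Import all_boot all_order all_algebra.
From mathcomp Require Import classical_sets reals.
From mathcomp Require Import ring lra zify.
Set Implicit Arguments. Unset Strict Implicit. Unset Printing Implicit Defensive.
Import Order.TTheory GRing.Theory Num.Theory.
Local Open Scope ring_scope.

(* Put m = k - 1, so 0 < m < n.  The fold map Y : R^n -> R^(m+1) keeps the
   coordinates x_0, ..., x_(m-1) and adds up x_m, ..., x_(n-1); the difference
   map E : R^(m+1) -> R^(m+2) sends z to
     (z_0, z_1 - z_0, ..., z_(m-1) - z_(m-2), z_m - 2 z_(m-1), z_(m-1) - z_m).
   E is injective, the coordinates of E z sum to zero, and P := (E Y)^T (E Y).
   - P is positive semidefinite, and rank P = rank E^T E = m + 1 = k because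
     Y has a right inverse.
   - For a nonzero x in Z^n_{>=0}, E Y x is a nonzero integer vector of zero
     sum, so P[x] >= 2; equality holds on explicit vectors, so min_COP P = 2.
   - Inverting E gives (sum x)^2 <= (m + 1)^4 P[x], and a general perturbation
     lemma turns such a bound into strict copositivity.
   - P[v] = 2 on four explicit families of test vectors, and a general
     determination lemma shows that a symmetric matrix whose form vanishes on
     these families is zero; applied to Q - P this gives perfection. *)

Section QuadraticForms.
Variables (R : realType) (n : nat).
Implicit Types (B D : 'M[R]_n) (x u w : 'cV[R]_n) (f g : 'I_n -> nat).

Lemma qformE B x : qform B x = \sum_j \sum_i x i 0 * B i j * x j 0.
Proof.
rewrite /qform mxE; apply: eq_bigr => i _; rewrite mxE mulr_suml.
by apply: eq_bigr => j _; rewrite !mxE.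
Qed.

Lemma qform_AtA p (A : 'M[R]_(p, n)) x :
  qform (A^T *m A) x = \sum_r ((A *m x) r 0) ^+ 2.
Proof.
rewrite /qform !mulmxA -trmx_mul -mulmxA mxE.
by apply: eq_bigr => r _; rewrite mxE expr2.
Qed.

Lemma qformB B D x : qform (B - D) x = qform B x - qform D x.
Proof. by rewrite /qform mulmxBr mulmxBl !mxE. Qed.

Lemma qform0 B : qform B 0 = 0.
Proof. by rewrite /qform mulmx0 mxE. Qed.

Definition bform D u w : R := (u^T *m D *m w) 0 0.

Lemma bformDl D u u' w : bform D (u + u') w = bform D u w + bform D u' w.
Proof. by rewrite /bform linearD /= !mulmxDl mxE. Qed.

Lemma bformDr D u w w' : bform D u (w + w') = bform D u w + bform D u w'.
Proof. by rewrite /bform mulmxDr mxE. Qed.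

Lemma bform0l D w : bform D 0 w = 0.
Proof. by rewrite /bform trmx0 !mul0mx mxE. Qed.

Lemma bformC D u w : symmetric_mx D -> bform D u w = bform D w u.
Proof.
move=> sD; rewrite /bform.
have -> : (u^T *m D *m w) 0 0 = ((u^T *m D *m w)^T) 0 0 by rewrite [RHS]mxE.
by rewrite !trmx_mul trmxK sD mulmxA.
Qed.

Lemma qformD D u w : symmetric_mx D ->
  qform D (u + w) = qform D u + qform D w + bform D u w *+ 2.
Proof.
move=> sD; have -> : qform D (u + w) = bform D (u + w) (u + w) by [].
rewrite bformDl !bformDr (bformC w u sD) /qform /bform.
by rewrite mulr2n; ring.
Qed.

Definition addv f g : 'I_n -> nat := fun i => (f i + g i)%N.

Definition dv (i : 'I_n) : 'I_n -> nat := fun j => (j == i) : nat.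

Lemma natvec_ext f g : f =1 g -> natvec R f = natvec R g.
Proof. by move=> fg; apply/matrixP => i j; rewrite !mxE fg. Qed.

Lemma natvecD f g : natvec R (addv f g) = natvec R f + natvec R g.
Proof. by apply/matrixP => i j; rewrite !mxE /addv natrD. Qed.

Lemma bform_dv D i j : bform D (natvec R (dv i)) (natvec R (dv j)) = D i j.
Proof.
have dvE k : natvec R (dv k) = delta_mx k 0.
  by apply/matrixP => i' j'; rewrite !mxE /dv ord1 eqxx andbT.
by rewrite !dvE /bform trmx_delta -rowE -colE !mxE.
Qed.

Lemma qform_perturb_lb D (c : R) x :
  (forall i j, `|D i j| <= c) -> (forall i, 0 <= x i 0) ->
  - (c * (\sum_i x i 0) ^+ 2) <= qform D x.
Proof.
move=> Dc x_ge0.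
have -> : c * (\sum_i x i 0) ^+ 2 = \sum_j \sum_i c * (x i 0 * x j 0).
  rewrite expr2 mulr_suml mulr_sumr exchange_big /=.
  by apply: eq_bigr => j _; rewrite !mulr_sumr; apply: eq_bigr => i _; ring.
rewrite qformE -sumrN; apply: ler_sum => j _; rewrite -sumrN.
apply: ler_sum => i _.
have := Dc i j; rewrite ler_norml => /andP [lb ub].
have xij := mulr_ge0 (x_ge0 i) (x_ge0 j).
have := ler_wpM2r xij lb; nra.
Qed.

Lemma strictly_copositive_of_sum_bound B (c : R) :
  symmetric_mx B -> 0 < c ->
  (forall x, (forall i, 0 <= x i 0) -> c * (\sum_i x i 0) ^+ 2 <= qform B x) ->
  strictly_copositive B.
Proof.
move=> sB c_gt0 Bc; split => //; exists c; split => // C sC Cc.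
split => // x x_ge0.
have -> : qform C x = qform B x + qform (C - B) x by rewrite qformB addrC subrK.
have close : forall i j, `|(C - B) i j| <= c by move=> i j; rewrite !mxE; exact/ltW/Cc.
have := qform_perturb_lb close x_ge0; have := Bc x x_ge0; lra.
Qed.

Lemma minCOP_attained B (a : R) (v0 : 'I_n -> nat) :
  (exists i, v0 i <> 0%N) -> qform B (natvec R v0) = a ->
  (forall v, (exists i, v i <> 0%N) -> a <= qform B (natvec R v)) ->
  minCOP B = a.
Proof.
move=> v0_nz Bv0 lb; rewrite /minCOP; set S := (X in inf X).
have aS : S a by exists v0.
have lbS : lbound S a by move=> y [v v_nz <-]; exact: lb.
apply/le_anti/andP; split; first by apply: ge_inf aS; exists a.
by apply: lb_le_inf => //; exists a.
Qed.

End QuadraticForms.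

(* A nonzero integer vector with zero coordinate sum has squared length at
   least 2 (one nonzero coordinate forces the others to compensate). *)
Lemma zero_sum_sqr_ge2 N (e : 'I_N -> int) r0 :
  \sum_i e i = 0 -> e r0 != 0 -> 2 <= \sum_i e i ^+ 2.
Proof.
move=> sum0 e_nz.
have abs_le : \sum_i `|e i| <= \sum_i e i ^+ 2 by apply: ler_sum => i _; nia.
apply: le_trans abs_le; rewrite (bigD1 r0) //=.
have rest : \sum_(i | i != r0) e i = - e r0.
  by move: sum0; rewrite (bigD1 r0) //= => /eqP; rewrite addrC addr_eq0 => /eqP.
have := ler_norm_sum (index_enum _) e (fun i => i != r0).
rewrite rest normrN => rest_le.
have e_ge1 : 1 <= `|e r0| by lia.
exact: lerD e_ge1 (le_trans e_ge1 rest_le).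
Qed.

Section IntervalVectors.
Variables (R : realType) (n : nat).
Local Notation vec v := (natvec R v).

Definition Iv (a b : nat) : 'I_n -> nat := fun i => ((a <= i)%N && (i < b)%N) : nat.

Lemma Iv_splitl (i : 'I_n) b : (i < b)%N -> vec (Iv i b) = vec (dv i) + vec (Iv i.+1 b).
Proof.
move=> ib; rewrite -natvecD; apply: natvec_ext => k.
rewrite /Iv /dv /addv -val_eqE /=; lia.
Qed.

Lemma Iv_splitr a (j : 'I_n) : (a <= j)%N -> vec (Iv a j.+1) = vec (Iv a j) + vec (dv j).
Proof.
move=> aj; rewrite -natvecD; apply: natvec_ext => k.
rewrite /Iv /dv /addv -val_eqE /=; lia.
Qed.

Lemma Iv_empty a b : (b <= a)%N -> vec (Iv a b) = 0.
Proof.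
move=> ba; apply/matrixP => i j; rewrite !mxE /Iv.
by rewrite (_ : (a <= i)%N && (i < b)%N = false) //; lia.
Qed.

Lemma dv_Iv (i : 'I_n) : vec (dv i) = vec (Iv i i.+1).
Proof. by apply: natvec_ext => k; rewrite /Iv /dv -val_eqE /=; lia. Qed.

End IntervalVectors.

(* Determination lemma behind perfection: with 0 < m < n, a symmetric matrix
   whose quadratic form vanishes on the four families of test vectors
     1_[a,b) (a < b < m),   1_[a,m) + e_g,   1_[a,m) + e_g + e_h,   e_g
   (a < m <= g, h) is zero. Intervals recover the block of indices < m, the
   vectors e_g and their combinations with 1_[a,m) the remaining blocks. *)
Section TestVectors.
Variables (R : realType) (n m : nat) (D : 'M[R]_n).
Hypotheses (m_gt0 : (0 < m)%N) (m_lt_n : (m < n)%N) (sD : symmetric_mx D).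
Local Notation vec v := (natvec R v).
Hypothesis van_interval : forall a b, (a < b)%N -> (b < m)%N -> qform D (vec (Iv a b)) = 0.
Hypothesis van_head_tail : forall a (g : 'I_n), (a < m)%N -> (m <= g)%N ->
  qform D (vec (addv (Iv a m) (dv g))) = 0.
Hypothesis van_head_tail2 : forall a (g h : 'I_n), (a < m)%N -> (m <= g)%N -> (m <= h)%N ->
  qform D (vec (addv (addv (Iv a m) (dv g)) (dv h))) = 0.
Hypothesis van_tail : forall g : 'I_n, (m <= g)%N -> qform D (vec (dv g)) = 0.

(* Comparing 1_[a,m) + e_g with 1_[a,m) + 2 e_g isolates both D[1_[a,m)]
   and the pairing of 1_[a,m) with e_g. *)
Lemma head_tail_vanish a (g : 'I_n) : (a < m)%N -> (m <= g)%N ->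
  qform D (vec (Iv a m)) = 0 /\ bform D (vec (Iv a m)) (vec (dv g)) = 0.
Proof.
move=> am mg.
have q1 := van_head_tail am mg; have q2 := van_head_tail2 am mg mg.
have gg : bform D (vec (dv g)) (vec (dv g)) = 0 by apply: van_tail.
rewrite natvecD (qformD _ _ sD) q1 van_tail // natvecD bformDl gg in q2.
have pair0 : bform D (vec (Iv a m)) (vec (dv g)) = 0 by move: q2; rewrite mulr2n; lra.
by rewrite natvecD (qformD _ _ sD) van_tail // pair0 mulr2n in q1; split => //; lra.
Qed.

Lemma interval_vanish a b : (b <= m)%N -> qform D (vec (Iv a b)) = 0.
Proof.
move=> bm; have [ba|ab] := leqP b a; first by rewrite Iv_empty // qform0.
have [/(van_interval ab)//|mb] := ltnP b m.
have -> : b = m by apply/eqP; rewrite eqn_leq bm mb.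
by rewrite (head_tail_vanish (g := Ordinal m_lt_n) _ (leqnn m)).1 //; lia.
Qed.

Lemma tail_entries (g h : 'I_n) : (m <= g)%N -> (m <= h)%N -> D g h = 0.
Proof.
move=> mg mh; have q := van_head_tail2 m_gt0 mg mh.
rewrite natvecD (qformD _ _ sD) van_head_tail // van_tail // natvecD bformDl in q.
rewrite (head_tail_vanish m_gt0 mh).2 in q; rewrite -(bform_dv D g h).
by move: q; rewrite mulr2n; lra.
Qed.

(* Off-diagonal head entries: expand D[1_[i,j]] into its four corners. *)
Lemma head_entries (i j : 'I_n) : (i <= j)%N -> (j < m)%N -> D i j = 0.
Proof.
move=> ij jm; rewrite -bform_dv; have [ltij|ji|eqij] := ltngtP i j; last first.
- have -> : j = i by apply: val_inj.
  by have := interval_vanish i (leq_ltn_trans ij jm); rewrite -dv_Iv.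
- by move: ij; rewrite leqNgt ji.
have hA := interval_vanish i jm; have hB := interval_vanish i.+1 jm.
have hC := interval_vanish i (ltnW jm); have hY := interval_vanish i.+1 (ltnW jm).
rewrite Iv_splitr // Iv_splitl // in hA; rewrite Iv_splitr // in hB.
rewrite Iv_splitl // in hC.
set y := vec (Iv i.+1 j) in hA hB hC hY.
rewrite (qformD _ _ sD) hC add0r bformDl in hA.
rewrite (qformD _ _ sD) hY add0r in hB.
by move: hA hB; rewrite !mulr2n; lra.
Qed.

Lemma mixed_entries (c g : 'I_n) : (c < m)%N -> (m <= g)%N -> D c g = 0.
Proof.
move=> cm mg; have := (head_tail_vanish cm mg).2.
rewrite Iv_splitl // bformDl bform_dv.
have [cm'|cm'] := ltnP c.+1 m; first by rewrite (head_tail_vanish cm' mg).2 addr0.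
by rewrite Iv_empty // bform0l addr0.
Qed.

Lemma vanish_on_tests : D = 0.
Proof.
have Dsym i j : D i j = D j i by rewrite -[in LHS]sD mxE.
apply/matrixP => i j; rewrite mxE.
have [im|im] := ltnP i m; have [jm|jm] := ltnP j m.
- have [ij|ji] := leqP i j; first exact: head_entries.
  by rewrite Dsym; apply: head_entries => //; apply: ltnW.
- exact: mixed_entries.
- by rewrite Dsym; apply: mixed_entries.
- exact: tail_entries.
Qed.

End TestVectors.

(* For z : nat -> V (only z 0, ..., z m matter) it
   produces m + 2 coordinates
     E z r = z r - z (r-1) (r < m, with z (-1) = 0),
     E z m = z m - 2 z (m-1),   E z (m+1) = z (m-1) - z m,
   which always sum to zero, and E is injective on z 0, ..., z m. *)
Section DifferenceMap.
Variable m : nat.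
Hypothesis m_gt0 : (0 < m)%N.

Definition prev (V : zmodType) (z : nat -> V) (r : nat) : V :=
  if r is r'.+1 then z r' else 0.

Definition dmap (V : zmodType) (z : nat -> V) (r : nat) : V :=
  if (r < m)%N then z r - prev z r
  else if r == m then z m - z m.-1 *+ 2
  else if r == m.+1 then z m.-1 - z m else 0.

Lemma dmap_ext (V : zmodType) (z z' : nat -> V) r :
  (forall c, (c <= m)%N -> z c = z' c) -> dmap z r = dmap z' r.
Proof.
move=> zz'; rewrite /dmap /prev.
have -> : z m = z' m by apply: zz'.
have -> : z m.-1 = z' m.-1 by apply: zz'; rewrite leq_pred.
case: ifP => [rm|_] //; rewrite zz'; last exact: ltnW.
by case: r rm => // r rm; rewrite zz' // ltnW // ltnW.
Qed.

Lemma dmap_sum (V : zmodType) (I : finType) (F : I -> nat -> V) r :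
  dmap (fun c => \sum_i F i c) r = \sum_i dmap (F i) r.
Proof.
rewrite /dmap /prev; case: ifP => _.
  case: r => [|r]; last by rewrite sumrB.
  by rewrite subr0; apply: eq_bigr => i _; rewrite subr0.
case: ifP => _; first by rewrite -sumrMnl sumrB.
by case: ifP => _; rewrite ?sumrB ?big1_eq.
Qed.

Lemma dmap_scale (V : pzRingType) (a : V) (F : nat -> V) r :
  dmap (fun c => a * F c) r = a * dmap F r.
Proof.
rewrite /dmap /prev; case: ifP => _; first by case: r => [|r]; rewrite mulrBr ?mulr0.
case: ifP => _; first by rewrite mulrBr mulrnAr.
by case: ifP => _; rewrite ?mulrBr ?mulr0.
Qed.

Lemma dmap_int (V : pzRingType) (z : nat -> int) r :
  dmap (fun c => (z c)%:~R : V) r = (dmap z r)%:~R.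
Proof.
rewrite /dmap /prev; case: ifP => _; first by case: r => [|r]; rewrite !(intrB, raddf0).
by case: ifP => _; [|case: ifP => _]; rewrite !(intrB, raddfMn, raddf0).
Qed.

Lemma sum_prev_telescope (V : zmodType) (z : nat -> V) c :
  \sum_(r < c.+1) (z r - prev z r) = z c.
Proof.
elim: c => [|c IH]; first by rewrite big_ord1 subr0.
by rewrite big_ord_recr /= IH addrC subrK.
Qed.

Lemma dmap_sum0 (V : zmodType) (z : nat -> V) : \sum_(r < m.+2) dmap z r = 0.
Proof.
rewrite !big_ord_recr /=.
have -> : \sum_(i < m) dmap z i = z m.-1.
  rewrite -(prednK m_gt0) -sum_prev_telescope prednK //.
  by apply: eq_bigr => [[i hi]] _; rewrite /dmap /= hi.
rewrite /dmap ltnn eqxx /= ltnNge leqnSn /= (gtn_eqF (ltnSn m)) eqxx.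
by rewrite addrACA mulr2n [_ - _ - z m]addrAC subrr add0r subrr.
Qed.

Lemma dmap_inj (V : zmodType) (z : nat -> V) :
  (forall r, (r < m.+2)%N -> dmap z r = 0) -> forall c, (c <= m)%N -> z c = 0.
Proof.
move=> Ez0.
have head c : (c < m)%N -> z c = 0.
  elim: c => [|c IH] cm.
    by move: (Ez0 0%N (ltn_trans m_gt0 (ltnW (ltnSn _)))); rewrite /dmap /prev cm subr0.
  have := Ez0 c.+1 (ltn_trans cm (ltnW (ltnSn _))).
  by rewrite /dmap /prev cm IH ?subr0 // ltnW.
move=> c; rewrite leq_eqVlt => /orP [/eqP ->|]; last exact: head.
have := Ez0 m (ltnW (ltnSn _)); rewrite /dmap ltnn eqxx (head m.-1) ?ltn_predL //.
by rewrite mul0rn subr0.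
Qed.

Definition dsq (V : pzRingType) (z : nat -> V) : V := \sum_(r < m.+2) dmap z r ^+ 2.

Lemma dsq_ge0 (R : realDomainType) (z : nat -> R) : 0 <= dsq z.
Proof. by apply: sumr_ge0 => r _; rewrite sqr_ge0. Qed.

(* On integer arguments not vanishing on 0..m, E z is a nonzero integer
   vector of zero sum, hence of squared length at least 2. *)
Lemma dsq_int_ge2 (z : nat -> int) c0 : (c0 <= m)%N -> z c0 != 0 -> 2 <= dsq z.
Proof.
move=> c0m zc0.
have [r Ezr] : exists r : 'I_m.+2, dmap z r != 0.
  apply/existsP; apply: contraR zc0; rewrite negb_exists => /forallP Ez0.
  apply/eqP; apply: (@dmap_inj _ z) => // r rm.
  by have := Ez0 (Ordinal rm); move/negPn/eqP.
exact: zero_sum_sqr_ge2 (dmap_sum0 z) Ezr.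
Qed.

Lemma dmap_le_sqrt (R : rcfType) (z : nat -> R) r :
  (r < m.+2)%N -> `|dmap z r| <= Num.sqrt (dsq z).
Proof.
move=> rm; rewrite -ler_sqr ?nnegrE ?sqrtr_ge0 // sqr_sqrtr ?dsq_ge0 //.
rewrite real_normK ?num_real // /dsq (bigD1 (Ordinal rm)) //= lerDl.
by apply: sumr_ge0 => i _; rewrite sqr_ge0.
Qed.

Lemma dmap_inv_bound (R : rcfType) (z : nat -> R) c0 : (c0 <= m)%N ->
  `|z c0| <= m.+1%:R * Num.sqrt (dsq z).
Proof.
set s := Num.sqrt (dsq z).
have s_ge0 : 0 <= s by apply: sqrtr_ge0.
have head c : (c < m)%N -> `|z c| <= c.+1%:R * s.
  elim: c => [|c IH] cm.
    have := dmap_le_sqrt z (ltn_trans cm (ltnW (ltnSn _))).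
    by rewrite /dmap /prev cm subr0 mul1r.
  have := dmap_le_sqrt z (r := c.+1) (ltn_trans cm (ltnW (ltnSn _))).
  rewrite /dmap /prev cm => step; have := IH (ltnW cm) => zc.
  rewrite -(subrK (z c) (z c.+1)); apply: le_trans (ler_normD _ _) _.
  by rewrite -(addn1 c.+1) natrD mulrDl mul1r addrC lerD.
move=> c0m; have [c0m'|mc0] := ltnP c0 m.
  by apply: le_trans (head c0 c0m') _; apply: ler_wpM2r; rewrite // ler_nat ltnW.
have -> : c0 = m by apply/eqP; rewrite eqn_leq c0m mc0.
have := dmap_le_sqrt z (ltnSn m.+1).
rewrite /dmap ltnNge leqnSn /= (gtn_eqF (ltnSn m)) eqxx => last_diff.
have zm1 : `|z m.-1| <= m%:R * s.
  by rewrite -{2}(prednK m_gt0); apply: head; rewrite ltn_predL.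
have -> : z m = z m.-1 - (z m.-1 - z m) by rewrite opprB addrC subrK.
apply: le_trans (ler_normB _ _) _.
by rewrite -(addn1 m) natrD mulrDl mul1r lerD.
Qed.

Lemma dmap_profile a b (t : int) (z : nat -> int) : (a <= b)%N -> (b <= m)%N ->
  (forall c, (c <= m)%N -> z c = ((a <= c)%N && (c < b)%N)%:Z + t * (c == m)%:Z) ->
  forall r, dmap z r = if (r < m)%N then (r == a)%:Z - (r == b)%:Z
            else if r == m then t - (((a < b)%N && (b == m))%:Z) *+ 2
            else if r == m.+1 then ((a < b)%N && (b == m))%:Z - t else 0.
Proof.
move=> ab bm zE r; have m1m : (m.-1 == m) = false by rewrite ltn_eqF // ltn_predL.
rewrite /dmap /prev; case: ifP => rm.
  rewrite zE ?(ltnW rm) // (ltn_eqF rm) mulr0 addr0.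
  case: r rm => [|r] rm; first by lia.
  by rewrite zE ?(ltnW (ltnW rm)) // (ltn_eqF (ltnW rm)) mulr0 addr0; lia.
by case: ifP => _; [|case: ifP => // _];
  rewrite !zE ?leq_pred // eqxx m1m mulr0 addr0 mulr1; lia.
Qed.

Lemma dsq_two_spikes (z : nat -> int) p q : (p < m.+2)%N -> (q < m.+2)%N ->
  (forall r, (r < m.+2)%N -> dmap z r ^+ 2 = (r == p)%:Z + (r == q)%:Z) -> dsq z = 2.
Proof.
have spike s : (s < m.+2)%N -> \sum_(r < m.+2) ((r == s :> nat) : int) = 1.
  move=> sm; rewrite (bigD1 (Ordinal sm)) //= eqxx big1 ?addr0 // => i ni.
  rewrite (_ : (i == s :> nat) = false) //.
  by apply: contraNF ni => /eqP e; apply/eqP/val_inj.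
move=> pm qm zE; rewrite /dsq.
rewrite (eq_bigr (fun r : 'I_m.+2 => (r == p :> nat)%:Z + (r == q :> nat)%:Z)).
  by rewrite big_split /= !spike.
by move=> r _; rewrite zE.
Qed.

End DifferenceMap.

Section Construction.
Variables (R : realType) (m n : nat).
Hypotheses (m_gt0 : (0 < m)%N) (m_lt_n : (m < n)%N).
Local Notation vec v := (natvec R v).

Definition fold_idx (i : 'I_n) : nat := minn i m.

Definition fold (x : 'cV[R]_n) (c : nat) : R := \sum_i (fold_idx i == c)%:R * x i 0.

Definition Emx : 'M[R]_(m.+2, m.+1) := \matrix_(r, c) dmap m (fun c' => (c' == c)%:R) r.
Definition Ymx : 'M[R]_(m.+1, n) := \matrix_(c, i) (fold_idx i == c)%:R.
Definition Lmx : 'M[R]_(m.+2, n) := Emx *m Ymx.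
Definition Pmx : 'M[R]_n := Lmx^T *m Lmx.

Definition coords (y : 'cV[R]_m.+1) (c' : nat) : R := \sum_(c < m.+1) y c 0 * (c' == c)%:R.

Lemma coordsE (y : 'cV[R]_m.+1) (c : 'I_m.+1) : coords y c = y c 0.
Proof.
rewrite /coords (bigD1 c) //= eqxx mulr1 big1 ?addr0 // => j.
by rewrite -val_eqE /= eq_sym => /negbTE ->; rewrite mulr0.
Qed.

Lemma Emx_mul (y : 'cV[R]_m.+1) r : (Emx *m y) r 0 = dmap m (coords y) r.
Proof.
rewrite mxE /coords dmap_sum; apply: eq_bigr => c _.
by rewrite dmap_scale mulrC !mxE.
Qed.

Lemma Ymx_mul (x : 'cV[R]_n) (c : 'I_m.+1) : (Ymx *m x) c 0 = fold x c.
Proof. by rewrite mxE; apply: eq_bigr => i _; rewrite mxE. Qed.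

Lemma Lmx_mul x r : (Lmx *m x) r 0 = dmap m (fold x) r.
Proof.
rewrite /Lmx -mulmxA Emx_mul; apply: dmap_ext => c cm.
by have := coordsE (Ymx *m x) (Ordinal (cm : (c < m.+1)%N)); rewrite Ymx_mul.
Qed.

Lemma qform_Pmx x : qform Pmx x = dsq m (fold x).
Proof. by rewrite /Pmx qform_AtA; apply: eq_bigr => r _; rewrite Lmx_mul. Qed.

Lemma Pmx_sym : symmetric_mx Pmx.
Proof. by rewrite /symmetric_mx /Pmx trmx_mul trmxK. Qed.

Lemma Pmx_psd : psd Pmx.
Proof. by split; [exact: Pmx_sym | move=> x; rewrite qform_Pmx dsq_ge0]. Qed.

(* E^T E is invertible: a kernel vector u has E u = 0, so u = 0. *)
Lemma EtE_rank : \rank (Emx^T *m Emx) = m.+1.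
Proof.
set A := Emx^T *m Emx; apply/eqP; rewrite eqn_leq rank_leq_row /= leqNgt.
apply/negP => rank_lt.
have [i u_nz] : exists i, row i (kermx A) != 0.
  have ker_nz : kermx A != 0 by rewrite -mxrank_eq0 mxrank_ker -lt0n subn_gt0.
  apply/existsP; apply: contraR ker_nz; rewrite negb_exists => /forallP all0.
  by apply/eqP/row_matrixP => i; rewrite row0; exact/eqP/negPn.
set u := row i (kermx A) in u_nz.
have qu : qform A u^T = 0.
  by rewrite /qform trmxK /u -row_mul mulmx_ker row0 mul0mx mxE.
rewrite /A qform_AtA in qu.
have Eu0 r : (r < m.+2)%N -> dmap m (coords u^T) r = 0.
  move=> rm; rewrite -(Emx_mul _ (Ordinal rm)); apply/eqP; rewrite -sqrf_eq0; apply/eqP.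
  exact: (psumr_eq0P (fun r _ => sqr_ge0 _) qu).
move/eqP: u_nz; apply; apply/rowP => c; rewrite mxE.
by have := dmap_inj m_gt0 Eu0 (ltn_ord c); rewrite coordsE !mxE.
Qed.

Definition Zmx : 'M[R]_(n, m.+1) := \matrix_(i, c) (i == c :> nat)%:R.

Lemma Ymx_Zmx : Ymx *m Zmx = 1%:M.
Proof.
apply/matrixP => c c'; rewrite !mxE.
have c'n : (c' < n)%N by apply: leq_trans (ltn_ord c') _.
rewrite (bigD1 (Ordinal c'n)) //= big1 ?addr0.
  rewrite !mxE /fold_idx /= (minn_idPl (ltn_ord c' : (c' <= m)%N)).
  by rewrite eqxx mulr1 eq_sym.
move=> j jc'; rewrite !mxE (_ : (j == c' :> nat) = false) ?mulr0 //.
by apply: contraNF jc' => /eqP e; apply/eqP/val_inj.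
Qed.

(* rank P = m + 1: at most the width of E, and E^T E = Z^T P Z. *)
Lemma Pmx_rank : \rank Pmx = m.+1.
Proof.
apply/eqP; rewrite eqn_leq; apply/andP; split.
  rewrite /Pmx /Lmx trmx_mul -!mulmxA.
  by apply: leq_trans (mxrankM_maxl _ _) _; exact: rank_leq_col.
rewrite -{1}EtE_rank.
have -> : Emx^T *m Emx = Zmx^T *m Pmx *m Zmx.
  rewrite /Pmx /Lmx trmx_mul !mulmxA -trmx_mul Ymx_Zmx trmx1 mul1mx.
  by rewrite -!mulmxA Ymx_Zmx mulmx1.
by apply: leq_trans (mxrankM_maxl _ _) _; exact: mxrankM_maxr.
Qed.

Definition fold_nat (v : 'I_n -> nat) (c : nat) : nat := (\sum_i (fold_idx i == c) * v i)%N.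

Lemma qform_Pmx_nat (v : 'I_n -> nat) :
  qform Pmx (vec v) = (dsq m (fun c => (fold_nat v c)%:Z))%:~R.
Proof.
have foldE c : fold (vec v) c = ((fold_nat v c)%:Z)%:~R.
  by rewrite /fold /fold_nat -pmulrn natr_sum; apply: eq_bigr => i _; rewrite mxE natrM.
rewrite qform_Pmx /dsq rmorph_sum; apply: eq_bigr => r _.
by rewrite (dmap_ext (z' := fun c => ((fold_nat v c)%:Z)%:~R)) ?dmap_int ?rmorphXn.
Qed.

Lemma qform_Pmx_ge2 (v : 'I_n -> nat) : (exists i, v i <> 0%N) -> 2 <= qform Pmx (vec v).
Proof.
move=> [i0 vi0]; rewrite qform_Pmx_nat -[2]/((2 : int)%:~R) ler_int.
apply: (dsq_int_ge2 m_gt0 (c0 := fold_idx i0)); first exact: geq_minr.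
rewrite eqz_nat -lt0n /fold_nat (bigD1 i0) //= eqxx mul1n.
by apply: leq_trans (leq_addr _ _); rewrite lt0n; apply/eqP.
Qed.

(* Test vectors on which the form equals 2: the folded vector has a profile
   1_[a,b) + t e_m whose image under E consists of two unit spikes. *)
Lemma qform_Pmx_eq2 (v : 'I_n -> nat) a b (t : int) p q :
  (a <= b)%N -> (b <= m)%N -> (p < m.+2)%N -> (q < m.+2)%N ->
  (forall c, (c <= m)%N ->
     (fold_nat v c)%:Z = ((a <= c)%N && (c < b)%N)%:Z + t * (c == m)%:Z) ->
  (forall r, (r < m.+2)%N ->
     (if (r < m)%N then (r == a)%:Z - (r == b)%:Z
      else if r == m then t - (((a < b)%N && (b == m))%:Z) *+ 2
      else if r == m.+1 then ((a < b)%N && (b == m))%:Z - t else 0) ^+ 2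
     = (r == p)%:Z + (r == q)%:Z) ->
  qform Pmx (vec v) = 2.
Proof.
move=> ab bm pm qm profile spikes; rewrite qform_Pmx_nat.
rewrite (dsq_two_spikes (p := p) (q := q)) // => r rm.
by rewrite (dmap_profile m_gt0 ab bm profile) spikes.
Qed.

Lemma fold_natD f g c : fold_nat (addv f g) c = (fold_nat f c + fold_nat g c)%N.
Proof. by rewrite /fold_nat -big_split; apply: eq_bigr => i _; rewrite /addv mulnDr. Qed.

Lemma sum_pick (f : 'I_n -> nat) c (cn : (c < n)%N) :
  (\sum_(i : 'I_n) (i == c :> nat) * f i)%N = f (Ordinal cn).
Proof.
rewrite (bigD1 (Ordinal cn)) //= eqxx mul1n big1 ?addn0 // => i ni.
rewrite (_ : (i == c :> nat) = false) //.
by apply: contraNF ni => /eqP e; apply/eqP/val_inj.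
Qed.

Lemma fold_nat_head v c : (c < m)%N ->
  fold_nat v c = (\sum_(i : 'I_n) (i == c :> nat) * v i)%N.
Proof.
move=> cm; apply: eq_bigr => i _; rewrite /fold_idx.
by have -> : (minn i m == c) = (i == c :> nat) by lia.
Qed.

Lemma fold_nat_tail v : fold_nat v m = (\sum_(i : 'I_n) (m <= i) * v i)%N.
Proof.
apply: eq_bigr => i _; rewrite /fold_idx.
by have -> : (minn i m == m) = (m <= i)%N by lia.
Qed.

Lemma fold_nat_Iv a b c : (c <= m)%N -> (b <= m)%N ->
  fold_nat (Iv a b) c = ((a <= c)%N && (c < b)%N).
Proof.
move=> cm bm; have [cm'|mc] := ltnP c m.
  by rewrite fold_nat_head // (sum_pick _ (ltn_trans cm' m_lt_n)).
have -> : c = m by apply/eqP; rewrite eqn_leq cm mc.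
rewrite fold_nat_tail big1; last by move=> i _; rewrite /Iv; lia.
by rewrite (_ : (m < b)%N = false) ?andbF //; apply/negbTE; rewrite -leqNgt.
Qed.

Lemma fold_nat_dv (g : 'I_n) c : (c <= m)%N -> (m <= g)%N -> fold_nat (dv g) c = (c == m).
Proof.
move=> cm mg; have [cm'|mc] := ltnP c m.
  rewrite fold_nat_head // (sum_pick _ (ltn_trans cm' m_lt_n)) /dv /=.
  rewrite (_ : (c == m) = false); last by lia.
  by rewrite (_ : Ordinal _ == g = false) // -val_eqE /=; lia.
have -> : c = m by apply/eqP; rewrite eqn_leq cm mc.
rewrite fold_nat_tail eqxx (bigD1 g) //= /dv eqxx mg big1 // => i ni.
by rewrite (negbTE ni) muln0.
Qed.

Lemma Pmx_interval a b : (a < b)%N -> (b < m)%N -> qform Pmx (vec (Iv a b)) = 2.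
Proof.
move=> ab bm; apply: (qform_Pmx_eq2 (a := a) (b := b) (t := 0) (p := a) (q := b)); try lia.
  by move=> c cm; rewrite fold_nat_Iv ?mul0r ?addr0 //; apply: ltnW.
by move=> r rm; repeat (case: ifP => ?); try nia; try lia.
Qed.

Lemma Pmx_head_tail a (g : 'I_n) : (a < m)%N -> (m <= g)%N ->
  qform Pmx (vec (addv (Iv a m) (dv g))) = 2.
Proof.
move=> am mg; apply: (qform_Pmx_eq2 (a := a) (b := m) (t := 1) (p := a) (q := m)); try lia.
  by move=> c cm; rewrite fold_natD fold_nat_Iv // fold_nat_dv // mul1r PoszD.
by move=> r rm; repeat (case: ifP => ?); try nia; try lia.
Qed.

Lemma Pmx_head_tail2 a (g h : 'I_n) : (a < m)%N -> (m <= g)%N -> (m <= h)%N ->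
  qform Pmx (vec (addv (addv (Iv a m) (dv g)) (dv h))) = 2.
Proof.
move=> am mg mh.
apply: (qform_Pmx_eq2 (a := a) (b := m) (t := 2) (p := a) (q := m.+1)); try lia.
  move=> c cm; rewrite !fold_natD fold_nat_Iv // !fold_nat_dv // !PoszD.
  by case: (c == m); rewrite ?mulr1 ?mulr0 ?addr0 // addrA.
by move=> r rm; repeat (case: ifP => ?); try nia; try lia.
Qed.

Lemma Pmx_tail (g : 'I_n) : (m <= g)%N -> qform Pmx (vec (dv g)) = 2.
Proof.
move=> mg; apply: (qform_Pmx_eq2 (a := m) (b := m) (t := 1) (p := m) (q := m.+1)); try lia.
  move=> c cm; rewrite fold_nat_dv // mul1r.
  by rewrite (_ : (m <= c)%N && (c < m)%N = false) //; lia.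
by move=> r rm; repeat (case: ifP => ?); try nia; try lia.
Qed.

Lemma minCOP_Pmx : minCOP Pmx = 2.
Proof.
apply: (minCOP_attained (v0 := dv (Ordinal m_lt_n))); last exact: qform_Pmx_ge2.
  by exists (Ordinal m_lt_n); rewrite /dv eqxx.
exact: Pmx_tail.
Qed.

Lemma sum_fold (x : 'cV[R]_n) : \sum_i x i 0 = \sum_(c < m.+1) fold x c.
Proof.
rewrite /fold exchange_big /=; apply: eq_bigr => i _; rewrite -mulr_suml.
have im : (fold_idx i < m.+1)%N by rewrite ltnS geq_minr.
rewrite (bigD1 (Ordinal im)) //= eqxx big1 ?addr0 ?mul1r // => c ic.
rewrite (_ : (fold_idx i == c) = false) //.
by apply: contraNF ic => /eqP e; apply/eqP/val_inj.
Qed.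

(* Inverting E and summing: (sum x)^2 <= (m + 1)^4 P[x]. *)
Lemma Pmx_sum_bound (x : 'cV[R]_n) : (\sum_i x i 0) ^+ 2 <= m.+1%:R ^+ 4 * qform Pmx x.
Proof.
rewrite qform_Pmx; set s := Num.sqrt (dsq m (fold x)).
have s_ge0 : 0 <= s by apply: sqrtr_ge0.
have sum_le : `|\sum_i x i 0| <= m.+1%:R ^+ 2 * s.
  rewrite sum_fold; apply: le_trans (ler_norm_sum _ _ _) _.
  apply: le_trans (_ : \sum_(c < m.+1) m.+1%:R * s <= _).
    by apply: ler_sum => c _; apply: (dmap_inv_bound m_gt0); rewrite -ltnS.
  by rewrite sumr_const card_ord -mulrnAl -(mulr_natr (m.+1%:R : R)) -expr2.
rewrite -real_normK ?num_real // -(sqr_sqrtr (dsq_ge0 m (fold x))) -/s.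
rewrite (_ : 4 = 2 * 2)%N // exprM -exprMn ler_sqr ?nnegrE //.
by rewrite mulr_ge0 ?sqr_ge0.
Qed.

Lemma Pmx_strict : strictly_copositive Pmx.
Proof.
have K_gt0 : 0 < (m.+1%:R : R) ^+ 4 by rewrite exprn_gt0 ?ltr0n.
have invK_gt0 : 0 < ((m.+1%:R : R) ^+ 4)^-1 by rewrite invr_gt0.
apply: (strictly_copositive_of_sum_bound Pmx_sym invK_gt0) => x _.
by rewrite ler_pdivrMl // Pmx_sum_bound.
Qed.

(* Every symmetric Q agreeing with min_COP P = 2 on the minimal vectors of P
   differs from P by a matrix vanishing on all test vectors, hence Q = P. *)
Lemma Pmx_perfect : perfect_copositive Pmx.
Proof.
split; first exact: Pmx_strict.
move=> Q sQ QP; apply/eqP; rewrite -subr_eq0; apply/eqP.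
have sD : symmetric_mx (Q - Pmx) by rewrite /symmetric_mx linearB /= sQ Pmx_sym.
have vanish v : qform Pmx (vec v) = 2 -> qform (Q - Pmx) (vec v) = 0.
  move=> Pv; rewrite qformB QP; first by rewrite minCOP_Pmx Pv subrr.
  by rewrite /MinCOP /= minCOP_Pmx.
apply: (vanish_on_tests m_gt0 m_lt_n sD) => *; apply: vanish.
- exact: Pmx_interval.
- exact: Pmx_head_tail.
- exact: Pmx_head_tail2.
- exact: Pmx_tail.
Qed.

End Construction.

Unset Implicit Arguments.
Set Strict Implicit.

Theorem corollary5p4 (R : realType) (n k : nat) :
  (3 <= n)%N -> (1 < k)%N -> (k < n)%N ->
  exists P : 'M[R]_n, psd P /\ \rank P = k /\ perfect_copositive P.
Proof.
move=> _ k_gt1 k_lt_n.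
have m_gt0 : (0 < k.-1)%N by rewrite -ltnS prednK // ltnW.
have m_lt_n : (k.-1 < n)%N by apply: leq_ltn_trans (leq_pred k) k_lt_n.
exists (Pmx R k.-1 n); split; first exact: Pmx_psd.
split; last exact: Pmx_perfect.
by rewrite Pmx_rank // prednK // ltnW.
Qed.
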